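(* In a strategic game in the setting described in the context, let Assumption SAV be satisfied. Then for all $s,t\in\mathcal{S}$ with $s\neq t$ we have $s_i\neq t_i$ for every $i=1,2,\dots,n$.
   Context: Setting: there are $n\ge 2$ players and a measurable space $(\Omega,\mathcal{F})$. Each player $i$ has a prior $p_i$, an action set $A_i\subseteq\mathbb{R}$ with $|A_i|>1$, and a finite private information partition $\mathcal{I}_i$ of $\Omega$. The priors are equivalent (same null sets), and strategies agreeing up to null events are identified. A strategy of player $i$ is a $\sigma(\mathcal{I}_i)$-measurable function $s_i:\Omega\to A_i$, and player $i$ may apply any such function. For each strategy $s_i$, player $i$ has a unique conjecture $\Psi_i(s_i)$ about the $(n-1)$-tuple of strategies of the other players. The set of Savage acts available to player $i$ is the graph $\mathcal{S}_i=\{(s_i,\Psi_i(s_i)) : s_i \text{ a strategy of player } i\}$, viewed as a set of strategy tuples $s=(s_1,\dots,s_n)$. Under SAV these graphs coincide, $\mathcal{S}_1=\cdots=\mathcal{S}_n$, and $\mathcal{S}$ denotes this common set. Assumption SAV (strategic certainty): for every player $i$ and every strategy $s_i$, $\Psi_i(s_i)$ equals the true tuple of strategies the other players apply in response to $s_i$. *)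

From mathcomp Require Import all_boot all_order all_algebra.
From mathcomp Require Import all_classical all_reals all_analysis.
Set Implicit Arguments. Unset Strict Implicit. Unset Printing Implicit Defensive.
Import Order.TTheory GRing.Theory Num.Theory.
Local Open Scope classical_set_scope.
Local Open Scope ring_scope.

Section Game.
Context {d : measure_display} {T : measurableType d} {R : realType} {n : nat}.

Definition equiv_priors (p : 'I_n -> probability T R) : Prop :=
  forall i j (E : set T), measurable E -> (p i E = 0%E <-> p j E = 0%E).

(* finite information partition of player i: the cells are the fibres of
   [cell i : T -> 'I_(K i)] (finitely many cells), each cell measurable *)
Definition info_partition (K : 'I_n -> nat) (cell : forall i, T -> 'I_(K i)) : Prop :=
  forall i (k : 'I_(K i)), measurable [set w | cell i w = k].

(* a strategy of player i: a sigma(I_i)-measurable function T -> A_i,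
   i.e. (sigma(I_i) being generated by a finite partition) a function
   constant on the cells of I_i with values in A_i *)
Definition strategy (K : 'I_n -> nat) (cell : forall i, T -> 'I_(K i))
    (A : 'I_n -> set R) (i : 'I_n) (s : T -> R) : Prop :=
  (forall w, A i (s w)) /\ exists f : 'I_(K i) -> R, forall w, s w = f (cell i w).

(* identification of strategies agreeing up to null events (of the priors,
   which all have the same null sets) *)
Definition seq_eq (p : 'I_n -> probability T R) (f g : T -> R) : Prop :=
  forall i, ae_eq (p i) setT f g.

Definition profile := 'I_n -> T -> R.

Definition prof_eq (p : 'I_n -> probability T R) (s t : profile) : Prop :=
  forall j, seq_eq p (s j) (t j).

(* Psi i s_i : the conjecture of player i about the strategies of the others,
   given as a profile whose i-th component is irrelevant (ignored). *)
(* the graph S_i = {(s_i, Psi_i(s_i))} as a set of strategy tuples *)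
Definition savage_acts (p : 'I_n -> probability T R) (K : 'I_n -> nat)
    (cell : forall i, T -> 'I_(K i)) (A : 'I_n -> set R)
    (Psi : 'I_n -> (T -> R) -> profile) (i : 'I_n) (s : profile) : Prop :=
  strategy cell A i (s i) /\
  forall j, j != i -> seq_eq p (s j) (Psi i (s i) j).

End Game.

From mathcomp Require Import all_boot all_order all_algebra.
From mathcomp Require Import all_classical all_reals all_analysis.
Local Open Scope classical_set_scope.
Local Open Scope ring_scope.

(* A Savage act of player i is the pair (s_i, Psi_i(s_i)), so it is determined
   up to null events by its i-th component.  As all the sets S_i coincide, two
   distinct elements of S must therefore differ in every component. *)

Section SavageActs.
Context {d : measure_display} {T : measurableType d} {R : realType} {n : nat}.
Variable p : 'I_n -> probability T R.

Lemma seq_eq_sym (f g : T -> R) : seq_eq p f g -> seq_eq p g f.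
Proof. by move=> fg k; apply: ae_eq_sym. Qed.

Lemma seq_eq_trans (f g h : T -> R) :
  seq_eq p f g -> seq_eq p g h -> seq_eq p f h.
Proof. by move=> fg gh k; apply: ae_eq_trans (fg k) (gh k). Qed.

Variables (K : 'I_n -> nat) (cell : forall i, T -> 'I_(K i)) (A : 'I_n -> set R).
Variable Psi : 'I_n -> (T -> R) -> @profile d T R n.

Lemma savage_acts_eq (i : 'I_n) (s t : @profile d T R n) :
  (forall si si', strategy cell A i si -> strategy cell A i si' ->
     seq_eq p si si' -> forall j, j != i -> seq_eq p (Psi i si j) (Psi i si' j)) ->
  savage_acts p cell A Psi i s -> savage_acts p cell A Psi i t ->
  seq_eq p (s i) (t i) -> prof_eq p s t.
Proof.
move=> Psi_wd [si_strat s_Psi] [ti_strat t_Psi] st_i j.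
have [/eqP-> //|ji] := boolP (j == i).
apply: seq_eq_trans (s_Psi j ji) _.
apply: seq_eq_trans (Psi_wd _ _ si_strat ti_strat st_i j ji) _.
exact/seq_eq_sym/t_Psi.
Qed.

End SavageActs.

Arguments savage_acts_eq {d T R n p K cell A Psi i s t}.

Theorem theorem4 (d : measure_display) (T : measurableType d) (R : realType)
  (n : nat) (hn : (2 <= n)%N)
  (p : 'I_n -> probability T R) (hp : equiv_priors p)
  (A : 'I_n -> set R)
  (hA : forall i, exists a b, A i a /\ A i b /\ a <> b)
  (K : 'I_n -> nat) (cell : forall i, T -> 'I_(K i))
  (hcell : info_partition cell)
  (Psi : 'I_n -> (T -> R) -> profile)
  (* Psi i s_i is a tuple of strategies of the other players *)
  (hPsi_strat : forall i si, strategy cell A i si ->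
     forall j, j != i -> strategy cell A j (Psi i si j))
  (* Psi i is well defined on strategies identified up to null events *)
  (hPsi_wd : forall i si si', strategy cell A i si -> strategy cell A i si' ->
     seq_eq p si si' -> forall j, j != i -> seq_eq p (Psi i si j) (Psi i si' j))
  (* true responses of the other players to a strategy of player i *)
  (resp : 'I_n -> (T -> R) -> profile)
  (hresp_strat : forall i si, strategy cell A i si ->
     forall j, j != i -> strategy cell A j (resp i si j))
  (* Assumption SAV (strategic certainty) *)
  (hSAV : forall i si, strategy cell A i si ->
     forall j, j != i -> seq_eq p (Psi i si j) (resp i si j))
  (* under SAV, the graphs S_1, ..., S_n coincide *)
  (hS : forall i j (s : profile),
     savage_acts p cell A Psi i s <-> savage_acts p cell A Psi j s) :
  forall s t : profile,
    (forall i, savage_acts p cell A Psi i s) ->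
    (forall i, savage_acts p cell A Psi i t) ->
    ~ prof_eq p s t ->
    forall i, ~ seq_eq p (s i) (t i).
Proof.
move=> s t s_S t_S s_neq_t i st_i.
exact: s_neq_t (savage_acts_eq (hPsi_wd i) (s_S i) (t_S i) st_i).
Qed.
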